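(* Let $\kappa$ be an uncountable regular cardinal and suppose $2^\omega>\kappa$. Then there is a subset of $\kappa^\kappa$ which is open (in the usual topology) and $\kappa$-Borel but not $\kappa$-open.
   Context: The usual topology on $\kappa^\kappa$ is generated by the sets $N_\eta=\{\zeta\in\kappa^\kappa\mid\eta\subseteq\zeta\}$, $\eta:\alpha\to\kappa$, $\alpha<\kappa$. Basic $\kappa$-open sets are the sets $N_\eta=\{\zeta\in\kappa^\kappa\mid\eta\subseteq\zeta\}$ where $\eta:X\to\kappa$ with $X\subseteq\kappa$, $|X|<\kappa$, together with $\emptyset$. A set is $\kappa$-open if it is a union of at most $\kappa$ basic $\kappa$-open sets. The $\kappa$-Borel sets form the smallest class containing the basic $\kappa$-open sets and closed under complements, unions of at most $\kappa$ sets and intersections of at most $\kappa$ sets. *)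

(* The cardinal kappa is represented by a type K carrying a
   strict well-order [lt]; kappa^kappa is the function type K -> K. *)
From Stdlib Require Import Wellfounded.

Set Implicit Arguments.

Section Kappa.
Variable K : Type.
Variable lt : K -> K -> Prop.

Definition injective {A B : Type} (f : A -> B) : Prop :=
  forall x y, f x = f y -> x = y.

Definition strict_well_order : Prop :=
  well_founded lt /\
  (forall x y z, lt x y -> lt y z -> lt x z) /\
  (forall x y, lt x y \/ x = y \/ lt y x).

(* For X a subset of kappa: |X| < kappa, i.e. kappa does not inject into X. *)
Definition small (X : K -> Prop) : Prop :=
  ~ exists f : K -> {x : K | X x}, injective f.

(* kappa is a cardinal (initial ordinal): every proper initial segment has
   cardinality < kappa. *)
Definition is_cardinal : Prop := forall a : K, small (fun x => lt x a).

Definition is_regular : Prop :=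
  forall X : K -> Prop, small X -> exists b, forall x, X x -> lt x b.

Definition uncountable : Prop := ~ exists f : K -> nat, injective f.

Definition continuum_gt : Prop :=
  (exists f : K -> (nat -> bool), injective f) /\
  ~ exists g : (nat -> bool) -> K, injective g.

Definition kset := (K -> K) -> Prop.

(* N_eta for eta : D -> kappa, represented by a total function eta whose
   values outside D are irrelevant. *)
Definition N (D : K -> Prop) (eta : K -> K) : kset :=
  fun zeta => forall x, D x -> zeta x = eta x.

Definition usual_basic (B : kset) : Prop :=
  exists (a : K) (eta : K -> K), forall zeta, B zeta <-> N (fun x => lt x a) eta zeta.

Definition usual_open (U : kset) : Prop :=
  exists F : kset -> Prop,
    (forall B, F B -> usual_basic B) /\
    (forall zeta, U zeta <-> exists B, F B /\ B zeta).

Definition kbasic (B : kset) : Prop :=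
  (exists (D : K -> Prop) (eta : K -> K), small D /\
     forall zeta, B zeta <-> N D eta zeta) \/
  (forall zeta, ~ B zeta).

(* kappa-open: union of at most kappa basic kappa-open sets (indexed by K;
   repetitions and the empty basic set make this cover all families of size
   <= kappa, including the empty one). *)
Definition kopen (U : kset) : Prop :=
  exists F : K -> kset,
    (forall i, kbasic (F i)) /\
    (forall zeta, U zeta <-> exists i, F i zeta).

Inductive kBorel : kset -> Prop :=
  | kBorel_basic : forall B, kbasic B -> kBorel B
  | kBorel_compl : forall A, kBorel A -> kBorel (fun zeta => ~ A zeta)
  | kBorel_union : forall F : K -> kset, (forall i, kBorel (F i)) ->
      kBorel (fun zeta => exists i, F i zeta)
  | kBorel_inter : forall F : K -> kset, (forall i, kBorel (F i)) ->
      kBorel (fun zeta => forall i, F i zeta)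
  | kBorel_ext : forall A A', kBorel A -> (forall zeta, A zeta <-> A' zeta) ->
      kBorel A'.

End Kappa.

(* Fix a strictly increasing sequence (e n) in kappa, bounded by some a by
   regularity, and three distinct points c0, c1, c2.  The set U of all zeta
   with zeta x in {c0, c1} for every x < a is open in the usual topology and is
   an intersection of a-many unions of basic kappa-open sets.  A basic
   kappa-open subset N_eta of U must constrain every coordinate x < a, since
   otherwise resetting zeta x to c2 would stay inside N_eta.  Hence the 2^omega
   functions coding a real s by zeta (e n) = c_(s n) lie in pairwise different
   basic sets, and a cover of U by kappa of them would inject 2^omega into
   kappa. *)

From Stdlib Require Import Classical ClassicalEpsilon FunctionalExtensionality ProofIrrelevance.

Set Implicit Arguments.

Section Topology.
Variables (K : Type) (lt : K -> K -> Prop).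

Definition box (a : K) (V : K -> K -> Prop) : kset K :=
  fun zeta => forall x, lt x a -> V x (zeta x).

Lemma usual_open_box (a : K) (V : K -> K -> Prop) : usual_open lt (box a V).
Proof.
  exists (fun B => exists eta, box a V eta /\ B = N (fun x => lt x a) eta).
  split.
  - intros B [eta [_ ->]]. exists a, eta. reflexivity.
  - intros zeta; split.
    + intros Hzeta. exists (N (fun x => lt x a) zeta).
      split; [exists zeta; auto | intros x _; reflexivity].
    + intros [B [[eta [Heta ->]] HB]] x Hx. rewrite (HB x Hx). auto.
Qed.

End Topology.

Section Borel.
Variable K : Type.
Hypothesis Hunc : uncountable K.

Lemma small_of_countable (X : K -> Prop) (code : K -> nat) :
  (forall x y, X x -> X y -> code x = code y -> x = y) -> small X.
Proof.
  intros Hcode [f Hf]. apply Hunc.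
  exists (fun i => code (proj1_sig (f i))). intros i j Hij. apply Hf.
  destruct (f i) as [x Hx], (f j) as [y Hy]; simpl in Hij.
  apply subset_eq_compat, Hcode; assumption.
Qed.

Lemma small_singleton (x : K) : small (fun y => y = x).
Proof.
  apply (small_of_countable _ (fun _ => 0)). intros y z -> ->. reflexivity.
Qed.

Lemma kBorel_full : kBorel (fun _ : K -> K => True).
Proof.
  apply kBorel_ext with (fun zeta => ~ (fun _ : K -> K => False) zeta).
  - apply kBorel_compl, kBorel_basic. right. auto.
  - tauto.
Qed.

Lemma kBorel_coord_in (x : K) (V : K -> Prop) :
  kBorel (fun zeta : K -> K => V (zeta x)).
Proof.
  apply kBorel_ext with (fun zeta => exists v, V v /\ zeta x = v).
  - apply kBorel_union. intros v. apply kBorel_basic.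
    destruct (classic (V v)) as [Hv | Hv].
    + left. exists (fun y => y = x), (fun _ => v).
      split; [apply small_singleton |].
      intros zeta; split.
      * intros [_ Hx] y ->. exact Hx.
      * intros Hx. split; [exact Hv | apply Hx; reflexivity].
    + right. intros zeta [Hv' _]. contradiction.
  - intros zeta; split.
    + intros [v [Hv ->]]. exact Hv.
    + intros Hv. exists (zeta x). auto.
Qed.

Lemma kBorel_forall_in (P : K -> Prop) (A : K -> kset K) :
  (forall x, P x -> kBorel (A x)) -> kBorel (fun zeta => forall x, P x -> A x zeta).
Proof.
  intros HA. apply kBorel_inter. intros x.
  destruct (classic (P x)) as [Hx | Hx].
  - apply kBorel_ext with (A x); [now apply HA | tauto].
  - apply kBorel_ext with (fun _ => True); [apply kBorel_full | tauto].
Qed.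

Lemma kBorel_box (lt : K -> K -> Prop) (a : K) (V : K -> K -> Prop) :
  kBorel (box lt a V).
Proof.
  apply kBorel_forall_in. intros x _. apply kBorel_coord_in.
Qed.

End Borel.

Section Kopen.
Variable K : Type.

Definition update (zeta : K -> K) (x v : K) : K -> K :=
  fun y => if excluded_middle_informative (y = x) then v else zeta y.

Definition pins (U : kset K) (x : K) : Prop :=
  forall zeta, U zeta -> exists v, ~ U (update zeta x v).

Lemma box_pins (lt : K -> K -> Prop) (a : K) (V : K -> K -> Prop) (x v : K) :
  lt x a -> ~ V x v -> pins (box lt a V) x.
Proof.
  intros Hx Hv zeta _. exists v. intros Hupd.
  specialize (Hupd x Hx). unfold update in Hupd.
  destruct excluded_middle_informative as [_ | []]; [contradiction | reflexivity].
Qed.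

Lemma nbhd_domain_pinned (U : kset K) (D : K -> Prop) (eta zeta : K -> K) (x : K) :
  (forall z, N D eta z -> U z) -> N D eta zeta -> pins U x -> D x.
Proof.
  intros HDU Hzeta Hpin. apply NNPP. intros HDx.
  destruct (Hpin zeta (HDU _ Hzeta)) as [v Hv]. apply Hv, HDU.
  intros y Hy. unfold update.
  destruct excluded_middle_informative as [-> | _]; [contradiction | auto].
Qed.

Lemma kopen_index (U : kset K) (A : Type) (f : A -> K -> K) :
  kopen U -> (forall s, U (f s)) ->
  exists idx : A -> K, forall s t, idx s = idx t ->
    forall x, pins U x -> f s x = f t x.
Proof.
  intros [F [HF HU]] HfU.
  assert (Hcover : forall s, exists i, F i (f s)) by (intros s; apply HU, HfU).
  exists (fun s => proj1_sig (constructive_indefinite_description _ (Hcover s))).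
  intros s t Hst x Hx.
  destruct (constructive_indefinite_description _ (Hcover s)) as [i Hs].
  destruct (constructive_indefinite_description _ (Hcover t)) as [j Ht].
  simpl in Hst. subst j.
  destruct (HF i) as [[D [eta [_ HN]]] | Hempty]; [| destruct (Hempty _ Hs)].
  assert (HNU : forall z, N D eta z -> U z) by (intros z Hz; apply HU; exists i; apply HN, Hz).
  apply HN in Hs. apply HN in Ht.
  assert (HD : D x) by exact (nbhd_domain_pinned HNU Hs Hx).
  rewrite (Hs x HD), (Ht x HD). reflexivity.
Qed.

End Kopen.

Section Reals.
Variables (K : Type) (e : nat -> K) (c0 c1 : K).
Hypothesis e_inj : forall n m, e n = e m -> n = m.
Hypothesis c10 : c1 <> c0.

Definition encode (s : nat -> bool) : K -> K :=
  fun x => if excluded_middle_informative (exists n, e n = x /\ s n = true)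
           then c1 else c0.

Lemma encode_values (s : nat -> bool) (x : K) : encode s x = c0 \/ encode s x = c1.
Proof. unfold encode. destruct excluded_middle_informative; auto. Qed.

Lemma encode_at (s : nat -> bool) (n : nat) : encode s (e n) = c1 <-> s n = true.
Proof.
  unfold encode. destruct excluded_middle_informative as [[m [Hm Hs]] | Hn].
  - apply e_inj in Hm. subst m. tauto.
  - split; [intros H; contradiction (c10 (eq_sym H)) | intros Hs; exfalso; eauto].
Qed.

Lemma encode_inj_at (s t : nat -> bool) (n : nat) :
  encode s (e n) = encode t (e n) -> s n = t n.
Proof.
  intros Hst. pose proof (encode_at s n) as Hs. pose proof (encode_at t n) as Ht.
  rewrite Hst in Hs.
  destruct (s n), (t n); try reflexivity;
    [symmetry; apply Ht, Hs | apply Hs, Ht]; reflexivity.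
Qed.

End Reals.

Section Sequence.
Variables (K : Type) (lt : K -> K -> Prop).
Hypothesis lt_wf : well_founded lt.
Hypothesis lt_trans : forall x y z, lt x y -> lt y z -> lt x z.
Hypothesis Hreg : is_regular lt.
Hypothesis Hunc : uncountable K.

Lemma lt_irrefl (x : K) : ~ lt x x.
Proof.
  induction (lt_wf x) as [x _ IH]. intros Hx. exact (IH x Hx Hx).
Qed.

Lemma uncountable_inhabited : inhabited K.
Proof.
  apply NNPP. intros Hempty. apply Hunc.
  exists (fun x => False_rect nat (Hempty (inhabits x))).
  intros x. destruct (Hempty (inhabits x)).
Qed.

Lemma exists_gt (x : K) : exists y, lt x y.
Proof.
  destruct (Hreg (small_singleton Hunc (x := x))) as [b Hb]. exists b. auto.
Qed.

Lemma exists_increasing_seq : exists e : nat -> K, forall n m, n < m -> lt (e n) (e m).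
Proof.
  destruct uncountable_inhabited as [x0].
  set (next := fun x => proj1_sig (constructive_indefinite_description _ (exists_gt x))).
  assert (Hnext : forall x, lt x (next x))
    by (intros x; exact (proj2_sig (constructive_indefinite_description _ (exists_gt x)))).
  exists (fix e n := match n with 0 => x0 | S n => next (e n) end).
  intros n m Hnm. induction Hnm as [| m _ IH].
  - apply Hnext.
  - exact (lt_trans IH (Hnext _)).
Qed.

Lemma increasing_seq_inj (e : nat -> K) :
  (forall n m, n < m -> lt (e n) (e m)) -> forall n m, e n = e m -> n = m.
Proof.
  intros He n m Hnm.
  destruct (PeanoNat.Nat.lt_trichotomy n m) as [H | [H | H]]; [| exact H |];
    apply He in H; rewrite Hnm in H; destruct (lt_irrefl H).
Qed.

Lemma seq_bounded (e : nat -> K) : exists a, forall n, lt (e n) a.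
Proof.
  set (index := fun x => epsilon (inhabits 0) (fun n => e n = x)).
  assert (Hindex : forall x, (exists n, e n = x) -> e (index x) = x)
    by (intros x Hx; exact (epsilon_spec (inhabits 0) _ Hx)).
  assert (Hsmall : small (fun x => exists n, e n = x)).
  { apply (small_of_countable Hunc _ index).
    intros x y Hx Hy Hxy. rewrite <- (Hindex x Hx), <- (Hindex y Hy), Hxy. reflexivity. }
  destruct (Hreg Hsmall) as [a Ha]. exists a. eauto.
Qed.

End Sequence.

Theorem proposition2p4 (K : Type) (lt : K -> K -> Prop)
  (Hwo : strict_well_order lt)
  (Hcard : is_cardinal lt)
  (Hreg : is_regular lt)
  (Hunc : uncountable K)
  (Hcont : continuum_gt K) :
  exists U : kset K, usual_open lt U /\ kBorel U /\ ~ kopen U.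
Proof.
  destruct Hwo as [lt_wf [lt_trans _]].
  destruct (exists_increasing_seq lt_trans Hreg Hunc) as [e He].
  pose proof (increasing_seq_inj lt_wf e He) as e_inj.
  destruct (seq_bounded Hreg Hunc e) as [a Ha].
  set (c0 := e 0); set (c1 := e 1); set (c2 := e 2).
  assert (c10 : c1 <> c0) by (intros H; discriminate (e_inj _ _ H)).
  assert (c2_outside : ~ (c2 = c0 \/ c2 = c1))
    by (intros [H | H]; discriminate (e_inj _ _ H)).
  exists (box lt a (fun _ v => v = c0 \/ v = c1)).
  split; [apply usual_open_box | split; [apply (kBorel_box Hunc) |]].
  intros Hopen.
  destruct (kopen_index (encode e c0 c1) Hopen) as [idx Hidx].
  { intros s x _. apply encode_values. }
  apply (proj2 Hcont). exists idx. intros s t Hst.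
  apply functional_extensionality. intros n.
  apply (encode_inj_at e e_inj c10), (Hidx s t Hst), (box_pins (e n) c2 (Ha n) c2_outside).
Qed.
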